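(* Let $\mathring B_1,\dots,\mathring B_k$ be open Euclidean balls in $\mathbb R^d$, let $B_j$ denote the closed ball with the same center and radius as $\mathring B_j$ ($j\in[k]$), and let $B_c$ be a closed Euclidean ball in $\mathbb R^d$. Let $P$ be a set of representative points of intersections with respect to the family $\{B_c,B_1,\dots,B_k\}$. For any subfamily $\{\mathring B_{i_1},\dots,\mathring B_{i_r}\}\subseteq\{\mathring B_1,\dots,\mathring B_k\}$, let $P'=\{x\in\mathbb R^d: x\in B_c \text{ and } x\notin\mathring B_j \text{ for all } j\in\{i_1,\dots,i_r\}\}$. If $P'\neq\emptyset$, then $P\cap P'\neq\emptyset$.
   Context: For a family of closed Euclidean balls in $\mathbb R^d$, denote by $S_j$ the boundary sphere of ball $j$. A set $P\subseteq\mathbb R^d$ is a set of representative points of intersections for the family if for every subfamily $F$ with $|F|\le d$: (i) if $\bigcap_{j\in F}S_j$ is connected, then $P$ contains a point of $\bigcap_{j\in F}S_j$; and (ii) if $\bigcap_{j\in F}S_j$ contains at most two points, then $P$ contains $\bigcap_{j\in F}S_j$. *)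

(* Points of R^d are row vectors 'rV[R]_d
   (the topology on matrices is the product topology = Euclidean topology). *)
From HB Require Import structures.
From mathcomp Require Import all_boot all_order all_algebra.
From mathcomp Require Import all_classical all_reals all_analysis.
Set Implicit Arguments. Unset Strict Implicit. Unset Printing Implicit Defensive.
Import Order.TTheory GRing.Theory Num.Theory.
Import numFieldNormedType.Exports.
Local Open Scope ring_scope.
Local Open Scope classical_set_scope.

Section Balls.
Variables (R : realType) (d : nat).

Definition sqdist (x y : 'rV[R]_d) : R := \sum_(i < d) (x ord0 i - y ord0 i) ^+ 2.

Definition closed_ball_E (c : 'rV[R]_d) (r : R) : set 'rV[R]_d :=
  [set x | sqdist x c <= r ^+ 2].
Definition open_ball_E (c : 'rV[R]_d) (r : R) : set 'rV[R]_d :=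
  [set x | sqdist x c < r ^+ 2].
Definition sphere_E (c : 'rV[R]_d) (r : R) : set 'rV[R]_d :=
  [set x | sqdist x c = r ^+ 2].

Definition sphere_inter (I : finType) (c : I -> 'rV[R]_d) (r : I -> R)
  (F : {set I}) : set 'rV[R]_d :=
  [set x | forall j, j \in F -> sphere_E (c j) (r j) x].

(* P is a set of representative points of intersections for the family of
   closed balls (c j, r j), j : I.  "Connected" is taken to include
   non-emptiness (standard convention). *)
Definition rep_points (I : finType) (c : I -> 'rV[R]_d) (r : I -> R)
  (P : set 'rV[R]_d) : Prop :=
  forall F : {set I}, (#|F| <= d)%N ->
    ((sphere_inter c r F !=set0 /\ connected (sphere_inter c r F)) ->
        exists2 x, P x & sphere_inter c r F x) /\
    ((exists a b : 'rV[R]_d, sphere_inter c r F `<=` [set a; b]) ->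
        sphere_inter c r F `<=` P).

End Balls.

From HB Require Import structures.
From mathcomp Require Import all_boot all_order all_algebra.
From mathcomp Require Import all_classical all_reals all_analysis.
From mathcomp Require Import ring lra.
Import Order.TTheory GRing.Theory Num.Theory.
Import numFieldNormedType.Exports.
Set Implicit Arguments. Unset Strict Implicit. Unset Printing Implicit Defensive.
Local Open Scope ring_scope.
Local Open Scope classical_set_scope.

(* Write P' as the region where eps_g (|x - c_g|^2 - r_g^2) <= 0 for every ball g
   of the family, with signs eps_g in {-1, 0, 1}.  Start from a point x of P'
   and the empty subfamily F, and keep x on the intersection S_F of the spheres
   of F.  If the centres of F are affinely dependent, one sphere can be dropped
   without changing S_F; so either S_F = S_F0 for some F0 of size at most d,
   or some S_F0 containing x has at most two points, and then x is itself a
   representative point.  Otherwise S_F0 = S_F has at least three points, so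
   it is a sphere of positive dimension (or the whole space), hence connected,
   and it contains a representative point y.  The trace of P' on S_F is closed
   and nonempty; if it is not all of S_F it cannot be open, which forces a
   point of P' on S_F onto the boundary sphere of a new ball g.  Adding g to F
   and repeating terminates. *)

Lemma linked_connected (T : topologicalType) (A : set T) p0 : A p0 ->
  (forall x, A x -> exists K, [/\ connected K, K `<=` A, K p0 & K x]) -> connected A.
Proof.
move=> Ap0 linked; suff -> : A = connected_component A p0 by exact: component_connected.
apply/seteqP; split=> [x Ax|]; last exact: connected_component_sub.
by have [K [cK KA Kp0 Kx]] := linked x Ax; exists K.
Qed.

Section EuclideanGeometry.
Variables (R : realType) (d : nat).
Implicit Types (u v w x y c : 'rV[R]_d) (r s t : R).

Definition dot u v : R := \sum_(i < d) u ord0 i * v ord0 i.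

Lemma dotC u v : dot u v = dot v u.
Proof. by apply: eq_bigr => i _; rewrite mulrC. Qed.

Lemma dotDl u v w : dot (u + v) w = dot u w + dot v w.
Proof. by rewrite /dot -big_split; apply: eq_bigr => i _; rewrite !mxE mulrDl. Qed.

Lemma dotZl s u w : dot (s *: u) w = s * dot u w.
Proof. by rewrite /dot mulr_sumr; apply: eq_bigr => i _; rewrite !mxE mulrA. Qed.

Lemma dotDr u v w : dot w (u + v) = dot w u + dot w v.
Proof. by rewrite dotC dotDl !(dotC w). Qed.

Lemma dotZr s u w : dot w (s *: u) = s * dot w u.
Proof. by rewrite dotC dotZl dotC. Qed.

Lemma dotDD u v : dot (u + v) (u + v) = dot u u + 2 * dot u v + dot v v.
Proof. by rewrite dotDl !dotDr (dotC v u); ring. Qed.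

Lemma dot0l w : dot 0 w = 0.
Proof. by rewrite -(scale0r 0) dotZl mul0r. Qed.

Lemma dot_suml (J : finType) (A : {pred J}) (f : J -> 'rV[R]_d) w :
  dot (\sum_(j in A) f j) w = \sum_(j in A) dot (f j) w.
Proof. exact: (big_morph (dot^~ w) (fun u v => dotDl u v w) (dot0l w)). Qed.

Lemma dotxx_eq0 u : (dot u u == 0) = (u == 0).
Proof.
apply/idP/eqP => [|->]; last by rewrite /dot big1 // => i _; rewrite mxE mul0r.
rewrite psumr_eq0 => [/allP u0|i _]; last by rewrite -expr2 sqr_ge0.
apply/rowP => i; have /eqP := u0 i (mem_index_enum i).
by rewrite mxE => /eqP; rewrite mulf_eq0 orbb => /eqP.
Qed.

Lemma sqdistE x y : sqdist x y = dot (x - y) (x - y).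
Proof. by apply: eq_bigr => i _; rewrite !mxE expr2. Qed.

Lemma sqdist_sub_centers x x0 c c0 :
  sqdist x c - sqdist x0 c = sqdist x c0 - sqdist x0 c0 - 2 * dot (x - x0) (c - c0).
Proof.
rewrite /sqdist /dot -!sumrB mulr_sumr -sumrB.
by apply: eq_bigr => i _; rewrite !mxE; ring.
Qed.

(* The difference of the equations of two spheres is the equation of their
   radical hyperplane. *)
Lemma sphere_radical x x0 c c0 r r0 :
  sphere_E c0 r0 x -> sphere_E c0 r0 x0 -> sphere_E c r x0 ->
  sphere_E c r x <-> dot (x - x0) (c - c0) = 0.
Proof.
rewrite /sphere_E /= => x_c0 x0_c0 x0_c.
have := sqdist_sub_centers x x0 c c0; rewrite x_c0 x0_c0 x0_c subrr sub0r => E.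
split=> [x_c | dot0]; last by move: E; rewrite dot0 mulr0 oppr0 => /subr0_eq.
by move: E; rewrite x_c subrr => /esym /eqP; rewrite oppr_eq0 mulf_eq0 pnatr_eq0 => /eqP.
Qed.

Lemma sphere_chord q b c r : sphere_E c r q -> sphere_E c r b ->
  2 * dot (q - c) (b - q) = - dot (b - q) (b - q).
Proof.
rewrite /sphere_E /= !sqdistE => qc.
have -> : b - c = (q - c) + (b - q) by rewrite [RHS]addrC subrKA.
by rewrite dotDD qc; lra.
Qed.

Lemma sphere_chord_scale a b e c r s :
  sphere_E c r a -> sphere_E c r b -> sphere_E c r e -> b - a = s *: (e - a) ->
  s * (s - 1) * dot (e - a) (e - a) = 0.
Proof.
move=> ac bc ec ba; have := sphere_chord ac bc.
rewrite ba dotZl !dotZr mulrCA (sphere_chord ac ec).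
by move/eqP; rewrite -subr_eq0 => /eqP <-; ring.
Qed.

Lemma sphere_chords_free a b e c r al be :
  sphere_E c r a -> sphere_E c r b -> sphere_E c r e -> a <> b -> a <> e -> b <> e ->
  al *: (b - a) + be *: (e - a) = 0 -> al = 0 /\ be = 0.
Proof.
move=> ac bc ec ab ae be_ comb.
have ea0 : e - a != 0 by rewrite subr_eq0; apply/eqP => /esym.
suff al0 : al = 0.
  split=> //; move/eqP: comb; rewrite al0 scale0r add0r scaler_eq0 (negbTE ea0) orbF.
  by move/eqP.
apply/eqP/negPn/negP => al_neq0.
have ba : b - a = (- (be / al)) *: (e - a).
  apply: (scalerI al_neq0); rewrite scalerA mulrN mulrCA mulfV // mulr1 scaleNr.
  by apply/eqP; rewrite -addr_eq0 comb.
move/eqP: (sphere_chord_scale ac bc ec ba).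
rewrite !mulf_eq0 dotxx_eq0 (negbTE ea0) orbF subr_eq0 => /orP[] /eqP s_val.
  by apply: ab; apply/eqP; rewrite eq_sym -subr_eq0 ba s_val scale0r.
by apply: be_; apply: (addIr (- a)); rewrite ba s_val scale1r.
Qed.

Lemma continuous_dot (T : topologicalType) (f g : T -> 'rV[R]_d) :
  continuous f -> continuous g -> continuous (fun z => dot (f z) (g z)).
Proof.
move=> cf cg; have -> : (fun z => dot (f z) (g z)) =
    \sum_(i < d) (fun z => f z ord0 i * g z ord0 i).
  by apply/funext => z; rewrite fct_sumE.
apply: (big_ind (fun h : T -> R => continuous h)) => [|h1 h2 c1 c2 z|i _ z].
- exact: cst_continuous.
- exact: continuousD (c1 z) (c2 z).
- apply: continuousM.
    exact: continuous_comp (cf z) (@coord_continuous R 1 d ord0 i (f z)).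
  exact: continuous_comp (cg z) (@coord_continuous R 1 d ord0 i (g z)).
Qed.

Lemma continuous_sqdist c : continuous (fun x : 'rV[R]_d => sqdist x c).
Proof.
have -> : (fun x => sqdist x c) = (fun x => dot (x - c) (x - c)).
  by apply/funext => x; rewrite sqdistE.
have cB : continuous (fun x : 'rV[R]_d => x - c).
  by move=> x; apply: continuousB; [exact: cvg_id | exact: cst_continuous].
exact: continuous_dot.
Qed.

Section SphericalArc.
Variables q b e : 'rV[R]_d.

Definition arc_dir t := (1 - t) *: (b - q) + t *: (e - q).

(* The second intersection point of the line through [q] with direction
   [arc_dir t] with any sphere through [q], [b] and [e]; it runs from [b] to
   [e] as [t] runs from [0] to [1]. *)
Definition arc t := q +
  (((1 - t) * dot (b - q) (b - q) + t * dot (e - q) (e - q)) /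
   dot (arc_dir t) (arc_dir t)) *: arc_dir t.

Lemma arc0 : q != b -> arc 0 = b.
Proof.
rewrite eq_sym -subr_eq0 -dotxx_eq0 => bq0.
rewrite /arc /arc_dir subr0 scale1r scale0r !addr0 mul1r mul0r addr0.
by rewrite mulfV // scale1r addrC subrK.
Qed.

Lemma arc1 : q != e -> arc 1 = e.
Proof.
rewrite eq_sym -subr_eq0 -dotxx_eq0 => eq0.
rewrite /arc /arc_dir subrr scale0r add0r scale1r mul0r mul1r add0r.
by rewrite mulfV // scale1r addrC subrK.
Qed.

Lemma arc_dir_neq0 c r t : sphere_E c r q -> sphere_E c r b -> sphere_E c r e ->
  q <> b -> q <> e -> b <> e -> arc_dir t != 0.
Proof.
move=> qc bc ec qb qe be; apply/eqP => /(sphere_chords_free qc bc ec qb qe be) [t1 t0].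
by move: t1; rewrite t0 subr0 => /eqP; rewrite oner_eq0.
Qed.

Lemma arc_sphere c r t : sphere_E c r q -> sphere_E c r b -> sphere_E c r e ->
  arc_dir t != 0 -> sphere_E c r (arc t).
Proof.
move=> qc bc ec w0.
have chord : 2 * dot (q - c) (arc_dir t) =
    - ((1 - t) * dot (b - q) (b - q) + t * dot (e - q) (e - q)).
  rewrite /arc_dir [X in 2 * X]dotDr !dotZr mulrDr (mulrCA 2 (1 - t)) (mulrCA 2 t).
  by rewrite (sphere_chord qc bc) (sphere_chord qc ec); ring.
rewrite /sphere_E /= sqdistE /arc addrAC; move: chord w0; rewrite -dotxx_eq0.
set w := arc_dir t; set N := (1 - t) * _ + _; set D := dot w w => chord D0.
rewrite (dotDD (q - c)) -(sqdistE q c) qc dotZr !dotZl.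
have -> : dot (q - c) w = - N / 2 by rewrite -chord; field.
by rewrite dotZr -/D; field.
Qed.

Lemma arc_continuous : (forall t, arc_dir t != 0) -> continuous arc.
Proof.
move=> w0 t.
have c1B : continuous (fun s : R => 1 - s).
  move=> s; apply: (@continuousB _ _ _ (fun=> 1 : R) id); first exact: cst_continuous.
  exact: cvg_id.
have cw : continuous arc_dir.
  move=> s; apply: (@continuousD _ _ _ (fun s => (1 - s) *: (b - q)) (fun s => s *: (e - q))).
    exact: continuousZr_tmp (c1B s).
  by apply: continuousZr_tmp; exact: cvg_id.
have cN : continuous (fun s => (1 - s) * dot (b - q) (b - q) + s * dot (e - q) (e - q)).
  move=> s; apply: (@continuousD _ _ _ (fun s => (1 - s) * dot (b - q) (b - q))
                                       (fun s => s * dot (e - q) (e - q))).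
    by apply: continuousM; [exact: c1B | exact: cst_continuous].
  by apply: continuousM; [exact: cvg_id | exact: cst_continuous].
apply: (@continuousD _ _ _ (cst q) (fun s => _ *: arc_dir s)); first exact: cst_continuous.
apply: continuousZ; last exact: cw.
apply: continuousM; first exact: cN.
by apply: continuousV; [rewrite dotxx_eq0 | exact: (continuous_dot cw cw)].
Qed.

End SphericalArc.

Lemma segment01_0 : `[0, 1] (0 : R).
Proof. by rewrite /= in_itv /= lexx ler01. Qed.

Lemma segment01_1 : `[0, 1] (1 : R).
Proof. by rewrite /= in_itv /= lexx ler01. Qed.

Lemma connected_rowT : connected [set: 'rV[R]_d].
Proof.
apply: (@linked_connected _ [set: 'rV[R]_d] 0) => // x _.
exists ((fun t : R => t *: x) @` `[0, 1]); split => //.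
- apply: connected_continuous_connected; first exact: segment_connected.
  by apply: continuous_subspaceT => t; apply: continuousZr_tmp; exact: cvg_id.
- by exists 0; [exact: segment01_0 | rewrite scale0r].
- by exists 1; [exact: segment01_1 | rewrite scale1r].
Qed.

Lemma no_triple_sub_pair (A : set 'rV[R]_d) :
  (forall p1 p2 p3, A p1 -> A p2 -> A p3 -> p1 <> p2 -> p1 <> p3 -> p2 <> p3 -> False) ->
  exists a b, A `<=` [set a; b].
Proof.
move=> no_triple.
have [[a Aa] | A0] := pselect (exists a, A a); last first.
  by exists 0, 0 => x Ax; exfalso; apply: A0; exists x.
have [[b [Ab ab]] | Aa1] := pselect (exists b, A b /\ a <> b); last first.
  by exists a, a => x Ax; left; apply: contrapT => xa; apply: Aa1; exists x; split => // /esym.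
exists a, b => x Ax; apply: contrapT => /not_orP [xa xb].
by apply: (no_triple a b x) => // /esym.
Qed.

Lemma dependent_or_spanning (I : finType) (G : {set I}) (v : I -> 'rV[R]_d) :
  (d <= #|G|)%N ->
  (exists (al : I -> R) j1, [/\ j1 \in G, al j1 != 0 & \sum_(j in G) al j *: v j = 0]) \/
  (#|G| = d /\ forall w, (forall j, j \in G -> dot (v j) w = 0) -> w = 0).
Proof.
move=> dG; set M := \matrix_(i < #|G|) v (enum_val i).
have [free | not_free] := boolP (row_free M).
  have GM : #|G| = d by apply/eqP; rewrite eqn_leq dG -(eqP free) rank_leq_col.
  right; split=> // w orth.
  have [B BM] : exists B, B *m M = 1%:M by apply/row_fullP; rewrite /row_full (eqP free) GM.
  have Mw : M *m w^T = 0.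
    apply/matrixP => i k; rewrite (ord1 k) !mxE -[RHS](orth (enum_val i) (enum_valP i)).
    by apply: eq_bigr => j _; rewrite !mxE.
  by apply: trmx_inj; rewrite trmx0 -[w^T]mul1mx -BM -mulmxA Mw mulmx0.
left; set k := nz_row (kermx M).
have kM : k *m M = 0 by apply/eqP; rewrite -sub_kermx nz_row_sub.
have [i1 ki1] : exists i1, k ord0 i1 != 0.
  apply/existsP; move: not_free; rewrite -kermx_eq0 -nz_row_eq0 -/k; apply: contraNT.
  by move=> /existsPn k0; apply/eqP/rowP => i; rewrite mxE; apply/eqP/negPn; exact: k0.
exists (fun j => k ord0 (enum_rank_in (enum_valP i1) j)), (enum_val i1).
rewrite enum_valK_in; split=> //; first exact: enum_valP.
rewrite big_enum_val -[RHS]kM mulmx_sum_row; apply: eq_bigr => i _.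
by rewrite enum_valK_in rowK.
Qed.

End EuclideanGeometry.

Section SphereIntersections.
Variables (R : realType) (d : nat) (I : finType).
Variables (cI : I -> 'rV[R]_d) (rI : I -> R).
Local Notation S := (sphere_inter cI rI).

Lemma sphere_interS (F0 F : {set I}) : F0 \subset F -> S F `<=` S F0.
Proof. by move=> /fintype.subsetP F0F x SFx j /F0F; exact: SFx. Qed.

Lemma sphere_inter_connected (F : {set I}) :
  ~ (exists a b, S F `<=` [set a; b]) -> connected (S F).
Proof.
move=> not_pair; have [-> | [j jF]] := set_0Vmem F.
  suff -> : S finset.set0 = setT by exact: connected_rowT.
  by apply/seteqP; split => // x _ j; rewrite inE.
have [p0 Sp0] : exists p0, S F p0.
  apply: contrapT => SF0; apply: not_pair; exists 0, 0 => x Sx.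
  by exfalso; apply: SF0; exists x.
apply: (linked_connected Sp0) => x Sx.
have [-> | x_p0] := pselect (x = p0).
  by exists [set p0]; split; [exact: connected1 | move=> y -> | |].
have [q [Sq q_p0 q_x]] : exists q, [/\ S F q, q <> p0 & q <> x].
  apply: contrapT => no_q; apply: not_pair; exists p0, x => y Sy.
  apply: contrapT => /not_orP [y_p0 y_x]; exact: no_q (ex_intro _ y (And3 Sy y_p0 y_x)).
have w0 t : arc_dir q p0 x t != 0.
  exact: arc_dir_neq0 (Sq j jF) (Sp0 j jF) (Sx j jF) q_p0 q_x (nesym x_p0).
exists (arc q p0 x @` `[0, 1]); split.
- apply: connected_continuous_connected; first exact: segment_connected.
  exact/continuous_subspaceT/arc_continuous.
- move=> _ [t _ <-] i iF.
  by apply: arc_sphere; [exact: Sq | exact: Sp0 | exact: Sx | exact: w0].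
- by exists 0; [exact: segment01_0 | apply: arc0; apply/eqP].
- by exists 1; [exact: segment01_1 | apply: arc1; apply/eqP].
Qed.

Lemma sphere_inter_drop_dependent (F : {set I}) j0 j1 (al : I -> R) x0 :
  j0 \in F -> j1 \in F :\ j0 -> al j1 != 0 ->
  \sum_(j in F :\ j0) al j *: (cI j - cI j0) = 0 -> S F x0 ->
  S (F :\ j1) `<=` S F.
Proof.
move=> j0F; rewrite in_setD1 => /andP [j10 j1F] al1 dep Sx0 y Sy.
have Sy_j0 : sphere_E (cI j0) (rI j0) y by apply: Sy; rewrite in_setD1 eq_sym j10.
have radical j := sphere_radical (c := cI j) (r := rI j) Sy_j0 (Sx0 j0 j0F).
have orth j : j \in F :\ j0 -> j != j1 -> dot (cI j - cI j0) (y - x0) = 0.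
  rewrite in_setD1 => /andP [_ jF] jj1; rewrite dotC; apply/(radical j (Sx0 j jF)).
  by apply: Sy; rewrite in_setD1 jj1.
move=> j jF; have [-> | jj1] := eqVneq j j1; last by apply: Sy; rewrite in_setD1 jj1.
apply/(radical j1 (Sx0 j1 j1F)); rewrite dotC.
move: (congr1 (fun u => dot u (y - x0)) dep); rewrite dot0l dot_suml (bigD1 j1) /=; last first.
  by rewrite in_setD1 j10.
rewrite big1 => [|i /andP [iG ij1]]; last by rewrite dotZl orth // mulr0.
by rewrite addr0 dotZl => /eqP; rewrite mulf_eq0 (negbTE al1) => /eqP.
Qed.

Lemma sphere_inter_drop_spanning (F : {set I}) j0 j1 :
  j0 \in F -> j1 \in F :\ j0 ->
  (forall w, (forall j, j \in F :\ j0 -> dot (cI j - cI j0) w = 0) -> w = 0) ->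
  exists a b, S (F :\ j1) `<=` [set a; b].
Proof.
move=> j0F; rewrite in_setD1 => /andP [j10 j1F] span.
apply: no_triple_sub_pair => p1 p2 p3 S1 S2 S3 p12 p13 p23.
have S_j0 p : S (F :\ j1) p -> sphere_E (cI j0) (rI j0) p.
  by move=> Sp; apply: Sp; rewrite in_setD1 eq_sym j10.
have orth p j : S (F :\ j1) p -> j \in F :\ j0 -> j != j1 ->
    dot (cI j - cI j0) (p - p1) = 0.
  move=> Sp; rewrite in_setD1 => /andP [_ jF] jj1; rewrite dotC.
  have Sj q : S (F :\ j1) q -> sphere_E (cI j) (rI j) q.
    by move=> Sq; apply: Sq; rewrite in_setD1 jj1.
  exact/(sphere_radical (S_j0 p Sp) (S_j0 p1 S1) (Sj p1 S1)).1/Sj.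
set b2 := dot (cI j1 - cI j0) (p2 - p1); set b3 := dot (cI j1 - cI j0) (p3 - p1).
have comb : b3 *: (p2 - p1) + (- b2) *: (p3 - p1) = 0.
  apply: span => j jG; rewrite dotDr !dotZr.
  have [-> | jj1] := eqVneq j j1; first by rewrite -/b2 -/b3 mulNr mulrC addrN.
  by rewrite !orth // !mulr0 addr0.
have [_ b2_0] := sphere_chords_free (S_j0 _ S1) (S_j0 _ S2) (S_j0 _ S3) p12 p13 p23 comb.
apply: p12; apply/eqP; rewrite eq_sym -subr_eq0; apply/eqP/span => j jG.
have [-> | jj1] := eqVneq j j1; last exact: orth.
by rewrite -/b2 -[b2]opprK b2_0 oppr0.
Qed.

Lemma sphere_inter_reduce (F : {set I}) x0 : S F x0 ->
  exists F0 : {set I}, [/\ F0 \subset F, (#|F0| <= d)%N, S F0 x0 &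
                 S F0 `<=` S F \/ exists a b, S F0 `<=` [set a; b]].
Proof.
have [n] := ubnP #|F|; elim: n F x0 => // n IH F x0 Fn Sx0.
have [Fd | dF] := leqP #|F| d; first by exists F; split => //; left.
have [j0 j0F] : exists j0, j0 \in F.
  by apply/set0Pn; rewrite -card_gt0; exact: leq_ltn_trans (leq0n d) dF.
have cardF : #|F| = #|F :\ j0|.+1 by rewrite (cardsD1 j0 F) j0F.
have SF_sub j1 : S F `<=` S (F :\ j1) by apply: sphere_interS; exact: subsetDl.
have dG : (d <= #|F :\ j0|)%N by rewrite -ltnS -cardF.
have [[al [j1 [j1G al1 dep]]] | [cardG span]] :=
  dependent_or_spanning (fun j => cI j - cI j0) dG.
- have drop := sphere_inter_drop_dependent j0F j1G al1 dep Sx0.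
  have j1F : j1 \in F by move: j1G; rewrite in_setD1 => /andP [].
  have [|F0 [F0F F0d SF0x0 SF0]] := IH (F :\ j1) x0 _ (SF_sub j1 x0 Sx0).
    by move: Fn; rewrite (cardsD1 j1 F) j1F.
  exists F0; split=> //; first exact: fintype.subset_trans F0F (subsetDl _ _).
  by case: SF0 => [SF0 | pair]; [left => x /SF0 /drop | right].
- have [G0 | [j1 j1G]] := set_0Vmem (F :\ j0).
    exists (F :\ j0); split=> //; [exact: subsetDl | by rewrite cardG | exact: SF_sub |].
    by right; exists 0, 0 => x _; left; apply: span => j; rewrite G0 inE.
  have j1F : j1 \in F by move: j1G; rewrite in_setD1 => /andP [].
  exists (F :\ j1); split; [exact: subsetDl | | exact: SF_sub | right].
    by move: cardF; rewrite (cardsD1 j1 F) j1F cardG add1n => -[->].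
  exact: sphere_inter_drop_spanning j0F j1G span.
Qed.

End SphereIntersections.

Section SignRegion.
Variables (R : realType) (d : nat) (I : finType).
Variables (cI : I -> 'rV[R]_d) (rI : I -> R) (P : set 'rV[R]_d).
Hypothesis repP : rep_points cI rI P.
Variable eps : I -> R.
Local Notation S := (sphere_inter cI rI).

Definition power g x := sqdist x (cI g) - rI g ^+ 2.

(* [eps g] = 1 keeps the closed ball [g], [eps g] = -1 the complement of the
   open ball [g], and [eps g] = 0 imposes nothing. *)
Definition sign_region := [set x | forall g, eps g * power g x <= 0].

Lemma sphere_E_power g x : sphere_E (cI g) (rI g) x <-> power g x = 0.
Proof. by rewrite /power /sphere_E /=; split => [->|/subr0_eq]; [rewrite subrr|]. Qed.

Lemma continuous_signed_power g : continuous (fun x => eps g * power g x).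
Proof.
move=> x; apply: continuousM; first exact: cst_continuous.
apply: (@continuousB _ _ _ (fun x => sqdist x (cI g))); last exact: cst_continuous.
exact: continuous_sqdist.
Qed.

Lemma closed_sign_region : closed sign_region.
Proof.
have -> : sign_region =
    \bigcap_(g in setT) ((fun x => eps g * power g x) @^-1` [set y | y <= 0]).
  by apply/seteqP; split => x Qx g; [move=> _; exact: Qx | exact: Qx].
apply: closed_bigI => g _; apply: closed_comp; last exact: closed_le.
by move=> x _; exact: continuous_signed_power.
Qed.

(* Under the avoidance hypothesis, [sign_region] is also relatively open in
   [S F]: on [S F] it coincides with the open set [O] below. *)
Lemma sphere_inter_sub_sign_region F :
  connected (S F) -> S F `&` sign_region !=set0 ->
  (forall g z, g \notin F -> eps g != 0 -> S F z -> sign_region z -> power g z != 0) ->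
  S F `<=` sign_region.
Proof.
move=> conn ne avoid.
pose O := [set x | forall g, g \notin F -> eps g != 0 -> eps g * power g x < 0].
have openO : open O.
  rewrite openE => x Ox; apply: (filter_forall (nbhs_filter x)) => g.
  have [/andP [gF eg] | ] := boolP ((g \notin F) && (eps g != 0)); last first.
    move=> /nandP not_constrained; apply: nearW => y gF eg.
    by case: not_constrained; rewrite ?gF ?eg.
  have : open_nbhs x [set y | eps g * power g y < 0].
    split; last exact: Ox.
    apply: (@open_comp _ _ (fun y => eps g * power g y) [set r | r < 0]); last exact: open_lt.
    by move=> y _; exact: continuous_signed_power.
  by move=> /open_nbhs_nbhs; apply: filterS => y ? _ _.
have SQO : S F `&` sign_region = S F `&` O.
  apply/seteqP; split => z [Sz Qz]; split => // g.
    move=> gF eg; rewrite lt_neqAle Qz andbT mulf_eq0 negb_or eg.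
    exact: avoid gF eg Sz Qz.
  have [gF | gF] := boolP (g \in F); first by have /sphere_E_power -> := Sz g gF; rewrite mulr0.
  by have [-> | eg] := eqVneq (eps g) 0; [rewrite mul0r | exact/ltW/Qz].
have SQ := conn _ ne (ex_intro2 _ _ O openO SQO)
  (ex_intro2 _ _ sign_region closed_sign_region erefl).
by move=> z Sz; have [] : (S F `&` sign_region) z by rewrite SQ.
Qed.

Lemma sign_region_step F x : S F x -> sign_region x ->
  (exists2 y, P y & sign_region y) \/
  exists g z, [/\ g \notin F, S (g |: F) z & sign_region z].
Proof.
move=> Sx Qx; have [F0 [F0F F0d SF0x SF0]] := sphere_inter_reduce Sx.
have [rep_connected rep_pair] := repP F0d.
have [pair | not_pair] := pselect (exists a b, S F0 `<=` [set a; b]).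
  by left; exists x => //; exact: rep_pair.
have SF0E : S F0 = S F.
  apply/seteqP; split; last exact: sphere_interS.
  by case: SF0 => // pair; case: not_pair.
have conn := sphere_inter_connected not_pair.
have [y Py SF0y] := rep_connected (conj (ex_intro _ x SF0x) conn).
have [[g [z [gF eg Sz Qz pz]]] | avoid] := pselect (exists g z,
    [/\ g \notin F, eps g != 0, S F z, sign_region z & power g z = 0]).
  right; exists g, z; split => // j; rewrite in_setU1 => /orP [/eqP -> | jF].
    exact/sphere_E_power.
  exact: Sz.
left; exists y => //; rewrite SF0E in conn SF0y.
apply: sphere_inter_sub_sign_region conn _ _ _ SF0y.
  by exists x; split => //; rewrite -SF0E.
by move=> g z gF eg Sz Qz; apply/eqP => pz; apply: avoid; exists g, z; split.
Qed.

Theorem rep_points_meet_sign_region : sign_region !=set0 -> exists2 y, P y & sign_region y.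
Proof.
move=> [x Qx]; suff : forall F x, S F x -> sign_region x -> exists2 y, P y & sign_region y.
  by move=> /(_ finset.set0 x); apply => // j; rewrite inE.
move=> F; have [n] := ubnP #|~: F|; elim: n F => // n IH F Fn {}x Sx {}Qx.
have [// | [g [z [gF Sz Qz]]]] := sign_region_step Sx Qx.
apply: IH Sz Qz; rewrite -ltnS; apply: leq_trans _ Fn; rewrite ltnS proper_card //.
by rewrite properC properUr // finset.sub1set.
Qed.

End SignRegion.

Unset Implicit Arguments.

Theorem lemma3 (R : realType) (d k : nat)
  (c : 'I_k -> 'rV[R]_d) (r : 'I_k -> R) (hr : forall j, 0 < r j)
  (cc : 'rV[R]_d) (rc : R) (hrc : 0 < rc)
  (P : set 'rV[R]_d)
  (hP : rep_points (fun o : option 'I_k => if o is Some j then c j else cc)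
                   (fun o : option 'I_k => if o is Some j then r j else rc) P)
  (J : {set 'I_k}) :
  let P' := [set x | closed_ball_E cc rc x /\
                     forall j, j \in J -> ~ open_ball_E (c j) (r j) x] in
  P' !=set0 -> exists2 x, P x & P' x.
Proof.
move=> P'.
pose eps (o : option 'I_k) : R := if o is Some j then (if j \in J then -1 else 0) else 1.
suff -> : P' = sign_region (fun o => if o is Some j then c j else cc)
                           (fun o => if o is Some j then r j else rc) eps.
  exact: rep_points_meet_sign_region hP eps.
apply/seteqP; split => x.
- move=> [in_cc out_c] [j|]; rewrite /eps /power; last by rewrite mul1r subr_le0.
  case: ifP => jJ; last by rewrite mul0r.
  by rewrite mulN1r oppr_le0 subr_ge0 leNgt; apply/negP; exact: out_c.
- move=> Qx; split; first by have := Qx None; rewrite mul1r subr_le0.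
  move=> j jJ; have := Qx (Some j); rewrite /eps /power jJ mulN1r oppr_le0 subr_ge0.
  by rewrite /open_ball_E /= leNgt => /negP.
Qed.
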